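(* Let $q\in\mathbb{C}\setminus\{0,1,-1\}$ and let $a,a^\dagger,N$ be operators satisfying $$aa^\dagger-q\,a^\dagger a=q^{-N},\qquad a^\dagger a=[N],\qquad [N,a]=-a,\qquad [N,a^\dagger]=a^\dagger,$$ where $[X]=\frac{q^{X}-q^{-X}}{q-q^{-1}}$. For $m\in\mathbb{Z}$ put $L_m=-q^{N}(a^\dagger)^{m+1}a$. Define brackets recursively: for $m,k\in\mathbb{Z}$, $$\llbracket L_m,L_k\rrbracket=q^{m-k}L_mL_k-q^{k-m}L_kL_m,$$ and for $n\ge 3$ and $i_1,\dots,i_n\in\mathbb{Z}$, $$\llbracket L_{i_1},\dots,L_{i_n}\rrbracket=\sum_{s=1}^{n}(-1)^{s+1}\,q^{x_n i_s+y_n\sum_{l\neq s}i_l}\,L_{i_s}\,\llbracket L_{i_1},\dots,\widehat{L_{i_s}},\dots,L_{i_n}\rrbracket,$$ where the hat denotes omission, the product on the right is the ordinary operator product, and $(x_3,y_3)=(2,-1)$, $(x_n,y_n)=(n,0)$ for even $n\ge4$, $(x_n,y_n)=(n-1,-2)$ for odd $n\ge5$. Then for every $n\ge 3$ and all $i_1,\dots,i_n\in\mathbb{Z}$, $$\llbracket L_{i_1},\dots,L_{i_n}\rrbracket=\frac{\mathrm{sign}(n)}{(q-q^{-1})^{n-1}}\det\Big(q^{2\left(r-\lfloor\frac{n-1}{2}\rfloor\right)i_j}\Big)_{0\le r\le n-1,\;1\le j\le n}\;L_{i_1+\cdots+i_n},$$ i.e. the rows of the $n\times n$ matrix have exponents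 $-2\lfloor\frac{n-1}{2}\rfloor i_j,\,2(-\lfloor\frac{n-1}{2}\rfloor+1)i_j,\dots,2\lfloor\frac n2\rfloor i_j$ in column $j$, where $\mathrm{sign}(n)=1$ if $n\equiv0,1\pmod 4$ and $\mathrm{sign}(n)=-1$ if $n\equiv 2,3\pmod 4$, and $\lfloor\cdot\rfloor$ is the floor function.
   Context: The operators $a,a^\dagger,N$ form a $q$-deformed oscillator. The two-entry bracket is the $q$-commutator $[A,B]_{(p,r)}=pAB-rBA$ with $(p,r)=(q^{m-k},q^{k-m})$; with it the $L_m$ satisfy $[L_m,L_k]_{(q^{m-k},q^{k-m})}=[m-k]L_{m+k}$ (the $q$-deformed Virasoro–Witt algebra). *)

From HB Require Import structures.
From mathcomp Require Import all_boot all_order all_algebra.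
From mathcomp Require Import complex.
From mathcomp Require Import reals.
Set Implicit Arguments. Unset Strict Implicit. Unset Printing Implicit Defensive.
Import Order.TTheory GRing.Theory Num.Theory.
Local Open Scope ring_scope.

Section QVir.
Variables (C : fieldType) (A : unitAlgType C).
(* q : deformation parameter, Q stands for the operator q^N,
   a, ad stand for a and a^dagger. *)
Variables (q : C) (Q ad a : A).

Definition Lop (m : int) : A := - (Q * ad ^ (m + 1) * a).

Definition rem_at (T : Type) (j : nat) (s : seq T) : seq T :=
  take j s ++ drop j.+1 s.

Definition xy (n : nat) : int * int :=
  if n == 3%N then (2, -1)
  else if ~~ odd n then ((n : int), 0)
  else ((n : int) - 1, -2).

Definition bracket2 (m k : int) : A :=
  q ^ (m - k) *: (Lop m * Lop k) - q ^ (k - m) *: (Lop k * Lop m).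

(* nbr n s : the n-ary bracket [[L_{s_0},...,L_{s_{n-1}}]] (meaningful for
   n = size s >= 2). *)
Fixpoint nbr (n : nat) (s : seq int) {struct n} : A :=
  match n with
  | 0%N => 0
  | n1.+1 =>
    match n1 with
    | 0%N => 0
    | 1%N => bracket2 (nth 0 s 0) (nth 0 s 1)
    | _ =>
      \sum_(j < n)
        ((-1) ^+ j * q ^ ((xy n).1 * nth 0 s j
                          + (xy n).2 * \sum_(l <- rem_at j s) l))
          *: (Lop (nth 0 s j) * nbr n1 (rem_at j s))
    end
  end.

Definition bracket (s : seq int) : A := nbr (size s) s.

End QVir.

Definition sign_n (C : ringType) (n : nat) : C :=
  if (n %% 4 < 2)%N then 1 else -1.

Definition qmat (C : fieldType) (q : C) (n : nat) (s : seq int) : 'M[C]_n :=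
  \matrix_(r < n, j < n)
     q ^ (2 * ((r : int) - ((n.-1)./2 : int)) * nth 0 s j).

From HB Require Import structures.
From mathcomp Require Import all_boot all_order all_algebra.
From mathcomp Require Import complex.
From mathcomp Require Import reals.
From mathcomp Require Import ring zify.
Import Order.TTheory GRing.Theory Num.Theory.
Set Implicit Arguments. Unset Strict Implicit. Unset Printing Implicit Defensive.
Local Open Scope ring_scope.

(* Commuting every q^N to the left gives
     L_m L_k = (q^(-2m) q^(3N) (a^dagger)^(m+k+1) a + L_(m+k)) / (q - q^-1),
   so L_i L_j is L_(i+j) plus an i-dependent multiple of an operator depending
   only on i + j.  By induction on n, substitute the determinant formula for the
   (n-1)-ary brackets: the weights q^(x_n i_s + y_n sum_(l<>s) i_l) turn those
   determinants into the minors of the n x n matrix along its last row.  The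
   coefficient of L_(i_1+...+i_n) is then the Laplace expansion of the n x n
   determinant, and the coefficient of the other operator is the Laplace
   expansion of a determinant with two equal rows, hence 0. *)

Lemma mulr_exprz_qcomm (C : fieldType) (A : unitAlgType C) (x y : A) (c : C) :
  x \is a GRing.unit -> c != 0 -> y * x = c *: (x * y) ->
  forall j : int, y * x ^ j = c ^ j *: (x ^ j * y).
Proof.
move=> ux c0 yx.
have yxn (n : nat) : y * x ^+ n = c ^+ n *: (x ^+ n * y).
  elim: n => [|n IH]; first by rewrite !expr0 mul1r mulr1 scale1r.
  by rewrite exprSr mulrA IH -scalerAl -[in LHS]mulrA yx -scalerAr scalerA mulrA -!exprSr.
case=> n; first exact: yxn.
rewrite NegzE -!invr_expz.
have uxn : x ^+ n.+1 \is a GRing.unit by rewrite unitrX.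
have xny : x ^+ n.+1 * y = (c ^+ n.+1)^-1 *: (y * x ^+ n.+1).
  by rewrite yxn scalerA mulVf ?scale1r // expf_neq0.
by rewrite -{1}(mulKr uxn y) xny -scalerAr -scalerAl -!mulrA mulrV // mulr1.
Qed.

Lemma size_rem_at (T : Type) (j : nat) (s : seq T) : (j < size s)%N ->
  size (rem_at j s) = (size s).-1.
Proof. by move=> js; rewrite /rem_at size_cat size_take js size_drop; lia. Qed.

Lemma nth_rem_at (T : Type) (x0 : T) (j k : nat) (s : seq T) : (j < size s)%N ->
  nth x0 (rem_at j s) k = nth x0 s (bump j k).
Proof.
move=> js; rewrite /rem_at nth_cat size_take js /bump.
case: ltnP => jk; first by rewrite nth_take // add0n.
by rewrite nth_drop add1n; congr nth; lia.
Qed.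

Lemma sum_rem_at (j : nat) (s : seq int) : (j < size s)%N ->
  \sum_(l <- rem_at j s) l = \sum_(l <- s) l - nth 0 s j.
Proof.
move=> js; have {2}-> : s = take j s ++ nth 0 s j :: drop j.+1 s.
  by rewrite -drop_nth // cat_take_drop.
by rewrite /rem_at !big_cat big_cons /=; ring.
Qed.

Section QMatrix.

Variables (C : fieldType) (q : C).

Definition qminor n (s : seq int) (j : 'I_n.+1) : 'M[C]_n :=
  row' ord_max (col' j (qmat q n.+1 s)).

Lemma qminorE n s (j : 'I_n.+1) r k : size s = n.+1 ->
  qminor s j r k = q ^ (2 * ((r : int) - (n./2 : int)) * nth 0 (rem_at j s) k).
Proof.
move=> sz; rewrite /qminor !mxE nth_rem_at ?sz //= /bump.
by rewrite leqNgt ltn_ord add0n.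
Qed.

Lemma det_qmat_expand n s : \det (qmat q n.+1 s) = (-1) ^+ n *
  \sum_(j < n.+1) (-1) ^+ j * q ^ (2 * ((n : int) - (n./2 : int)) * nth 0 s j)
                  * \det (qminor s j).
Proof.
rewrite (expand_det_row _ ord_max) mulr_sumr; apply: eq_bigr => j _.
by rewrite /cofactor mxE exprD /qminor /=; ring.
Qed.

(* The same sum with the last-row exponent lowered by one expands a
   determinant whose last two rows coincide. *)
Lemma qminor_alternating_sum n s : (0 < n)%N ->
  \sum_(j < n.+1) (-1) ^+ j * q ^ (2 * ((n : int) - 1 - (n./2 : int)) * nth 0 s j)
                  * \det (qminor s j) = 0.
Proof.
move=> n_gt0.
pose B := \matrix_(r < n.+1, k < n.+1)
  q ^ (2 * ((minn r n.-1 : int) - (n./2 : int)) * nth 0 s k).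
have detB : \det B = 0.
  apply: (@determinant_alternate _ _ _ ord_max (inord n.-1)).
    by rewrite -val_eqE /= inordK; lia.
  by move=> k; rewrite !mxE inordK /=; [congr (q ^ (_ * _ * _)); lia | lia].
have sign_neq0 : (-1) ^+ n != 0 :> C by rewrite signr_eq0.
apply: (mulfI sign_neq0); rewrite mulr0 -[RHS]detB (expand_det_row _ ord_max).
rewrite mulr_sumr; apply: eq_bigr => j _; rewrite /cofactor.
have -> : row' ord_max (col' j B) = qminor s j.
  apply/matrixP => r k; rewrite /qminor !mxE /= /bump leqNgt ltn_ord add0n.
  by rewrite (minn_idPl _) // -ltnS prednK.
rewrite mxE exprD /=.
have -> : (minn n n.-1 : int) = (n : int) - 1 by lia.
ring.
Qed.

Lemma det_qmat_rem_at n s (j : 'I_n.+1) : q != 0 -> size s = n.+1 ->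
  \det (qmat q n (rem_at j s)) =
    q ^ (2 * ((n./2 : int) - ((n.-1)./2 : int)) * \sum_(l <- rem_at j s) l)
    * \det (qminor s j).
Proof.
move=> q0 sz; set d := (n./2 : int) - ((n.-1)./2 : int).
have szr : size (rem_at j s) = n by rewrite size_rem_at sz.
have -> : qminor s j = qmat q n (rem_at j s) *m
    diag_mx (\row_k q ^ (-2 * d * nth 0 (rem_at j s) k)).
  apply/matrixP => r k; rewrite qminorE // mul_mx_diag !mxE -expfzDr //.
  by congr (q ^ _); rewrite /d; ring.
rewrite det_mulmx det_diag.
under eq_bigr do rewrite mxE.
rewrite -(big_morph _ (fun m n => expfzDr m n q0) (expr0z q)) -mulr_sumr.
rewrite (big_nth 0) szr big_mkord mulrCA -expfzDr //.
by rewrite [_ + _](_ : _ = 0) ?expr0z ?mulr1 //; ring.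
Qed.

End QMatrix.

Lemma sign_nS (C : nzRingType) n : sign_n C n * (-1) ^+ n = sign_n C n.+1.
Proof.
have -> : (-1) ^+ n = (-1) ^+ (n %% 4) :> C.
  by rewrite {1}(divn_eq n 4) exprD mulnC exprM (exprM _ 2 2) sqrr_sign !expr1n mul1r.
rewrite /sign_n -[n.+1]addn1 -modnDml; have : (n %% 4 < 4)%N by rewrite ltn_mod.
by case: (n %% 4)%N => [|[|[|[|k]]]] //= _;
  rewrite !(exprS, expr0, mulr1, mulrN1, mul1r, opprK).
Qed.

Lemma xy_exponents n : (3 <= n)%N ->
  (xy n.+1).1 = 2 * ((n : int) - (n./2 : int)) /\
  (xy n.+1).2 = -2 * ((n./2 : int) - ((n.-1)./2 : int)).
Proof.
case: n => // n n_ge2; rewrite /xy !eqSS (_ : (n == 1)%N = false) /=; last lia.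
have := odd_double_half n; have := odd_double_half n.+1 => /=.
by case: (odd n) => /=; split; lia.
Qed.

Section QOscillator.

Variables (C : fieldType) (A : unitAlgType C) (q : C) (Q ad a : A).
Hypotheses (q_neq0 : q != 0) (qdiff_neq0 : q - q^-1 != 0).
Hypotheses (Q_unit : Q \is a GRing.unit) (ad_unit : ad \is a GRing.unit).
Hypotheses (Q_a : Q * a = q^-1 *: (a * Q)) (Q_ad : Q * ad = q *: (ad * Q)).
Hypothesis ad_a : ad * a = (q - q^-1)^-1 *: (Q - Q^-1).

Local Notation L := (Lop Q ad a).

(* [qnumN j] is the operator [N + j], with Q standing for q^N. *)
Definition qnumN (j : int) : A :=
  (q - q^-1)^-1 *: (q ^ j *: Q - q ^ (- j) *: Q^-1).

Lemma Q_adz (j : int) : Q * ad ^ j = q ^ j *: (ad ^ j * Q).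
Proof. exact: mulr_exprz_qcomm. Qed.

Lemma Qinv_adz (j : int) : Q^-1 * ad ^ j = q ^ (- j) *: (ad ^ j * Q^-1).
Proof.
rewrite -exprz_inv; apply: mulr_exprz_qcomm; rewrite ?invr_eq0 //.
apply: (canLR (mulKr Q_unit)); rewrite -scalerAr mulrA Q_ad -scalerAl scalerA.
by rewrite mulVf // scale1r mulrK.
Qed.

Lemma qnumN_mul_adz (i j : int) : qnumN i * ad ^ j = ad ^ j * qnumN (i + j).
Proof.
rewrite /qnumN -scalerAl -scalerAr; congr (_ *: _).
rewrite mulrBl mulrBr -!scalerAl -!scalerAr Q_adz Qinv_adz !scalerA.
by rewrite -!expfzDr // opprD.
Qed.

Lemma a_mul_adz (j : int) : a * ad ^ j = ad ^ (j - 1) * qnumN j.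
Proof.
have -> : a = ad^-1 * qnumN 0.
  by rewrite /qnumN oppr0 expr0z !scale1r -ad_a mulKr.
by rewrite -mulrA qnumN_mul_adz add0r mulrA -exprN1 -exprzDr // addrC.
Qed.

Lemma a_Q : a * Q = q *: (Q * a).
Proof. by rewrite Q_a scalerA mulfV // scale1r. Qed.

Lemma adz_Q (j : int) : ad ^ j * Q = q ^ (- j) *: (Q * ad ^ j).
Proof. by rewrite Q_adz scalerA -expfzDr // addNr expr0z scale1r. Qed.

Lemma adz_Qinv (j : int) : ad ^ j * Q^-1 = q ^ j *: (Q^-1 * ad ^ j).
Proof. by rewrite Qinv_adz scalerA -expfzDr // addrN expr0z scale1r. Qed.

Lemma Lop_mul (m k : int) :
  L m * L k = (q - q^-1)^-1 *:
    (q ^ (-2 * m) *: (Q ^+ 3 * ad ^ (m + k + 1) * a) + L (m + k)).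
Proof.
rewrite /Lop mulrNN !mulrA -(mulrA _ a Q) a_Q -!scalerAr -!scalerAl !mulrA.
rewrite -(mulrA Q _ Q) adz_Q -!scalerAr -!scalerAl !mulrA scalerA.
rewrite -(mulrA _ a (ad ^ _)) a_mul_adz !mulrA -(mulrA _ (ad ^ (m + 1))) -exprzDr //.
have -> : m + 1 + (k + 1 - 1) = m + k + 1 by ring.
rewrite /qnumN -scalerAr -scalerAl mulrBr mulrBl -!scalerAr -!scalerAl.
rewrite -(mulrA _ _ Q) -(mulrA _ _ Q^-1) adz_Q adz_Qinv.
rewrite -!scalerAr -!scalerAl !mulrA mulrK // -expr2 -exprSr.
rewrite !scalerBr !scalerA; congr (_ *: _ - _ *: _);
  rewrite -{1}(expr1z q) -!expfzDr // mulrAC -expfzDr // mulrC.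
  by congr (_ * q ^ _); ring.
have -> : 1 - (m + 1) + (- (k + 1) + (m + k + 1)) = 0 by ring.
by rewrite expr0z mulr1.
Qed.

Lemma bracket2_qmat (m k : int) : bracket2 q Q ad a m k =
  (q ^ (- (m + k)) * (sign_n C 2 / (q - q^-1) * \det (qmat q 2 [:: m; k])))
    *: L (m + k).
Proof.
rewrite /bracket2 !Lop_mul (addrC k m) !scalerA !scalerDr !scalerA.
have -> : q ^ (m - k) / (q - q^-1) * q ^ (-2 * m) =
          q ^ (k - m) / (q - q^-1) * q ^ (-2 * k).
  by rewrite ![_ / _ * _]mulrAC -!expfzDr //; congr (q ^ _ * _); ring.
rewrite [- (_ + _ *: L _)]opprD addrACA subrr add0r -scalerBl; congr (_ *: _).
rewrite det_qmat_expand !big_ord_recl big_ord0 !det_mx11 !qminorE //=.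
rewrite /sign_n /bump /= !subr0 !mulr0 !mul0r !expr0z !mulr1 !mul1r.
have qpow2 x : q ^ (2 * x) = q ^ x * q ^ x by rewrite mulrC -exprz_exp; exact: expr2.
rewrite !qpow2 !expfzDr // -!invr_expz expfzDr //.
have := expfz_neq0 m q_neq0; have := expfz_neq0 k q_neq0.
move: (q ^ m) (q ^ k) => u v v_neq0 u_neq0.
have qq_neq1 : q * q - 1 != 0 by rewrite -(mulfV q_neq0) -mulrBr mulf_neq0.
by rewrite expr1; field; rewrite q_neq0 qq_neq1 u_neq0 v_neq0.
Qed.

Lemma nbrS n s : (1 < n)%N -> nbr q Q ad a n.+1 s =
  \sum_(j < n.+1) ((-1) ^+ j * q ^ ((xy n.+1).1 * nth 0 s j
                                   + (xy n.+1).2 * \sum_(l <- rem_at j s) l))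
                   *: (L (nth 0 s j) * nbr q Q ad a n (rem_at j s)).
Proof. by case: n => [|[|n]]. Qed.

(* [e] absorbs the factor q^(-(i+j)) by which the binary bracket differs from
   the determinant formula: [e = -1] for [n = 2], [e = 0] for [n >= 3]. *)
Lemma nbr_step n s (e : int) : (1 < n)%N -> size s = n.+1 ->
  (xy n.+1).1 = 2 * ((n : int) - (n./2 : int)) ->
  (xy n.+1).2 = -2 * ((n./2 : int) - ((n.-1)./2 : int)) - e ->
  (forall j : 'I_n.+1, nbr q Q ad a n (rem_at j s) =
     (q ^ (e * \sum_(l <- rem_at j s) l) *
      (sign_n C n / (q - q^-1) ^+ n.-1 * \det (qmat q n (rem_at j s))))
     *: L (\sum_(l <- rem_at j s) l)) ->
  nbr q Q ad a n.+1 s =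
    (sign_n C n.+1 / (q - q^-1) ^+ n * \det (qmat q n.+1 s)) *: L (\sum_(l <- s) l).
Proof.
move=> n_gt1 sz x_eq y_eq nbr_rem.
set c := q - q^-1; set K := sign_n C n / c ^+ n.-1; set h := (n./2 : int).
set S := \sum_(l <- s) l; set X := Q ^+ 3 * ad ^ (S + 1) * a.
have summand (j : 'I_n.+1) :
    ((-1) ^+ j * q ^ ((xy n.+1).1 * nth 0 s j
                     + (xy n.+1).2 * \sum_(l <- rem_at j s) l))
      *: (L (nth 0 s j) * nbr q Q ad a n (rem_at j s)) =
    (K / c * ((-1) ^+ j * q ^ (2 * ((n : int) - 1 - h) * nth 0 s j)
               * \det (qminor q s j))) *: X +
    (K / c * ((-1) ^+ j * q ^ (2 * ((n : int) - h) * nth 0 s j)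
               * \det (qminor q s j))) *: L S.
  rewrite nbr_rem det_qmat_rem_at // -scalerAr scalerA Lop_mul sum_rem_at ?sz //.
  rewrite [nth 0 s j + _]addrC subrK -/S -/X -/c -/K scalerA scalerDr !scalerA.
  set t := nth 0 s j; set x := (xy n.+1).1; set y := (xy n.+1).2.
  set d := (n./2 : int) - ((n.-1)./2 : int).
  have pow_L : q ^ (x * t + y * (S - t)) * q ^ (e * (S - t)) * q ^ (2 * d * (S - t))
               = q ^ (2 * ((n : int) - h) * t).
    by rewrite -!expfzDr //; congr (q ^ _); rewrite /x /y /d /h x_eq y_eq; ring.
  have pow_X : q ^ (x * t + y * (S - t)) * q ^ (e * (S - t)) * q ^ (2 * d * (S - t))
               * q ^ (-2 * t) = q ^ (2 * ((n : int) - 1 - h) * t).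
    by rewrite pow_L -expfzDr //; congr (q ^ _); ring.
  by rewrite -pow_L -pow_X; congr (_ *: _ + _ *: _); ring.
rewrite nbrS // (eq_bigr _ (fun j _ => summand j)) big_split /= -!scaler_suml.
rewrite -!mulr_sumr qminor_alternating_sum ?mulr0 ?scale0r ?add0r; last lia.
congr (_ *: _); rewrite det_qmat_expand -/h -sign_nS.
have c_n : c ^+ n = c ^+ n.-1 * c by rewrite -exprSr prednK //; lia.
set D := \sum_(j < n.+1) _.
rewrite c_n invfM [RHS](_ : _ = sign_n C n * ((-1) ^+ n) ^+ 2 / c ^+ n.-1 / c * D).
  by rewrite sqrr_sign mulr1.
by rewrite /K; ring.
Qed.

Lemma nbr_qmat n s : (3 <= n)%N -> size s = n ->
  nbr q Q ad a n s =
    (sign_n C n / (q - q^-1) ^+ n.-1 * \det (qmat q n s)) *: L (\sum_(l <- s) l).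
Proof.
elim: n s => // n IH s n_ge2 sz.
have size_rem (j : 'I_n.+1) : size (rem_at j s) = n by rewrite size_rem_at sz.
have [n_eq2|n_ge3] : n = 2%N \/ (3 <= n)%N by lia.
  subst n; apply: (nbr_step (e := -1)) => // j.
  case: (rem_at j s) (size_rem j) => [|u [|v []]] // _.
  rewrite [nbr _ _ _ _ 2 _]/= bracket2_qmat !big_cons big_nil addr0.
  by congr (q ^ _ * _ *: _); ring.
have [x_eq y_eq] := xy_exponents n_ge3.
apply: (nbr_step (e := 0)) => //; first by rewrite subr0.
by move=> j; rewrite IH // mul0r expr0z mul1r.
Qed.

End QOscillator.

(* Q models q^N, and a^dagger is assumed invertible so that L_m makes sense for
   negative m. *)
Theorem theorem3 (R : realType) (A : unitAlgType R[i])
  (q : R[i]) (N Q ad a : A)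
  (hq0 : q != 0) (hq1 : q != 1) (hqm1 : q != -1)
  (hQunit : Q \is a GRing.unit) (hQN : Q * N = N * Q)
  (hQa : Q * a = q^-1 *: (a * Q)) (hQad : Q * ad = q *: (ad * Q))
  (hadunit : ad \is a GRing.unit)
  (hrel1 : a * ad - q *: (ad * a) = Q^-1)
  (hrel2 : ad * a = (q - q^-1)^-1 *: (Q - Q^-1))
  (hNa : N * a - a * N = - a)
  (hNad : N * ad - ad * N = ad) :
  forall (n : nat) (s : seq int), (3 <= n)%N -> size s = n ->
    bracket q Q ad a s =
      (sign_n R[i] n / (q - q^-1) ^+ n.-1 * \det (qmat q n s))
        *: Lop Q ad a (\sum_(i <- s) i).
Proof.
move=> n s n_ge3 sz; rewrite /bracket sz.
have qdiff_neq0 : q - q^-1 != 0.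
  have sq_neq1 : q ^+ 2 != 1 by rewrite -(expr1n _ 2) eqf_sqr negb_or hq1 hqm1.
  by rewrite -(mulfK hq0 (q - q^-1)) mulrBl mulVf // -expr2 mulf_neq0 ?invr_eq0 ?subr_eq0.
exact: nbr_qmat.
Qed.
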